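(* Let $G$ be a torsion-free group, $\mathbb{F}$ a field, $\mathsf{a}$ a unit in $\mathbb{F}[G]$ with $|supp(\mathsf{a})|=4$ and $|S_{\mathsf{a}}|=10$, and $\mathsf{b}$ a mate of $\mathsf{a}$. Then one of the following holds: (i) there exist distinct non-trivial $x,y\in G$ and $\mathsf{a}',\mathsf{b}'\in\mathbb{F}[G]$ with $supp(\mathsf{a}')=\{1,x,x^{-1},y\}$, $\mathsf{a}'\mathsf{b}'=1$ and $U(\mathsf{a},\mathsf{b})\cong U(\mathsf{a}',\mathsf{b}')$; (ii) there exist distinct non-trivial $x,y\in G$ and $\mathsf{a}',\mathsf{b}'\in\mathbb{F}[G]$ with $supp(\mathsf{a}')=\{1,x,y,xy\}$, $\mathsf{a}'\mathsf{b}'=1$ and $U(\mathsf{a},\mathsf{b})\cong U(\mathsf{a}',\mathsf{b}')$.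
   Context: $supp(\gamma)=\{x\in G:\gamma_x\ne0\}$; $S_{\mathsf{a}}=\{h^{-1}h':h\ne h',\ h,h'\in supp(\mathsf{a})\}$. A mate of $\mathsf{a}$ is an element $\mathsf{b}$ with $\mathsf{a}\mathsf{b}=1$ of minimal support size among all $\mathsf{b}'$ with $\mathsf{a}\mathsf{b}'=1$. For $\mathsf{c}\mathsf{d}=1$, $U(\mathsf{c},\mathsf{d})$ is the multigraph with vertex set $supp(\mathsf{d})$ whose edges are the sets $\{(h,h',g,g'),(h',h,g',g)\}$ with $h,h'\in supp(\mathsf{c})$, $g,g'\in supp(\mathsf{d})$, $g\ne g'$, $hg=h'g'$, each joining $g$ and $g'$. Isomorphism $\cong$ means a pair of bijections on vertices and on edges preserving adjacency and non-adjacency of vertices and of edges. *)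

(* Group algebra F[G] of an arbitrary (possibly infinite)
   group G (mathcomp's [groupType], which is also a choiceType), represented by
   finitely supported functions G -> F ([fsfun] from finmap). *)
From HB Require Import structures.
From mathcomp Require Import all_boot all_order all_algebra.
From mathcomp Require Import finmap.
Set Implicit Arguments. Unset Strict Implicit. Unset Printing Implicit Defensive.
Import Order.TTheory GRing.Theory Num.Theory.
Local Open Scope ring_scope.
Local Open Scope fset_scope.

Section GroupAlgebra.
Variables (G : groupType) (F : fieldType).

Notation GA := {fsfun G -> F with 0}.

Definition torsion_free : Prop :=
  forall (x : G) (n : nat), (0 < n)%N -> (x ^+ n)%g = 1%g -> x = 1%g.

Definition supp (c : GA) : {fset G} := finsupp c.

Definition gconv (c d : GA) (g : G) : F :=
  \sum_(h <- supp c) c h * d (h^-1 * g)%g.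

Definition mul_is_one (c d : GA) : Prop :=
  forall g : G, gconv c d g = (g == 1%g)%:R.

Definition is_unit_GA (c : GA) : Prop :=
  exists d : GA, mul_is_one c d /\ mul_is_one d c.

Definition is_mate (c d : GA) : Prop :=
  mul_is_one c d /\ forall d' : GA, mul_is_one c d' -> (#|` supp d| <= #|` supp d'|)%N.

Definition S_set (c : GA) : {fset G} :=
  [fset (h^-1 * h')%g | h in supp c, h' in (supp c `\ h)].

Definition quad := (G * G * G * G)%type.
Definition qswap (q : quad) : quad :=
  let: (h, h', g, g') := q in (h', h, g', g).
Definition edge_of (q : quad) : {fset quad} := [fset q; qswap q].

Definition valid_quad (c d : GA) (q : quad) : Prop :=
  let: (h, h', g, g') := q in
  [/\ h \in supp c, h' \in supp c, g \in supp d, g' \in supp d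
    & g != g' /\ (h * g)%g = (h' * g')%g].

Definition is_U_edge (c d : GA) (e : {fset quad}) : Prop :=
  exists q : quad, valid_quad c d q /\ e = edge_of q.

Definition U_vertex (c d : GA) := {g : G | g \in supp d}.
Definition U_edge (c d : GA) := {e : {fset quad} | is_U_edge c d e}.

Definition joins (e : {fset quad}) (u v : G) : Prop :=
  exists h h' : G, e = edge_of (h, h', u, v).

Definition U_vadj (c d : GA) (u v : U_vertex c d) : Prop :=
  exists e : U_edge c d, joins (proj1_sig e) (proj1_sig u) (proj1_sig v).

Definition U_eadj (c d : GA) (e1 e2 : U_edge c d) : Prop :=
  exists w x y : G, joins (proj1_sig e1) w x /\ joins (proj1_sig e2) w y.

Definition U_iso (c d c' d' : GA) : Prop :=
  exists (phi : U_vertex c d -> U_vertex c' d') (psi : U_edge c d -> U_edge c' d'),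
    [/\ bijective phi, bijective psi,
        (forall u v, U_vadj u v <-> U_vadj (phi u) (phi v))
      & (forall e1 e2, U_eadj e1 e2 <-> U_eadj (psi e1) (psi e2))].

End GroupAlgebra.

From mathcomp Require Import all_boot all_order all_algebra.
From mathcomp Require Import finmap.
From Stdlib Require Import Classical ProofIrrelevance.
Set Implicit Arguments. Unset Strict Implicit. Unset Printing Implicit Defensive.
Local Open Scope ring_scope.
Local Open Scope fset_scope.

(* Since |S_a| = 10 < 12 = 4 * 3, two quotients h^-1 h' of distinct elements of
   supp(a) coincide: h1^-1 h2 = h3^-1 h4 with h1 <> h3.  If h3 = h2 or h4 = h1,
   translating supp(a) so that the element shared by the two pairs becomes 1
   brings it to the form {1, x, x^-1, y}; torsion-freeness rules out h3 = h2 and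
   h4 = h1 together, which would make x an involution.  Otherwise h1, h2, h3, h4
   are distinct and translating by h1^-1 gives {1, x, y, xy}.
   Replacing a, b by t a and b t^-1 keeps a b = 1 and does not change U(a, b)
   up to isomorphism, because h g = h' g' iff (t h)(g t^-1) = (t h')(g' t^-1). *)

Section FiniteSets.
Variable T : choiceType.
Implicit Types (A : {fset T}) (s : seq T) (x : T).

Lemma imfset_can (f g : T -> T) A : cancel f g -> g @` (f @` A) = A.
Proof. by move=> fK; rewrite -imfset_comp (eq_imfset _ fK (fun=> erefl)) imfset_id. Qed.

Lemma fset_seq_card_uniq s : #|` [fset x in s]| = size s -> uniq s.
Proof. by move=> card_s; rewrite -[uniq s]negbK -ltn_size_undup -card_fseq card_s ltnn. Qed.

Lemma fset_eq_of_card A s :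
  uniq s -> {subset s <= A} -> #|` A| = size s -> A = [fset x in s].
Proof.
move=> s_uniq sA cardA; apply/eqP; rewrite eq_sym eqEfcard card_fseq undup_id //.
by rewrite cardA leqnn andbT; apply/fsubsetP => x; rewrite inE; apply: sA.
Qed.

Lemma fset_exists_notin A s : (size s < #|` A|)%N -> exists2 x, x \in A & x \notin s.
Proof.
move=> lt_s_A; have /fsubsetPn[x xA] : ~~ (A `<=` [fset x in s]).
  apply: contraTN lt_s_A => /fsubset_leq_card A_s.
  by rewrite -leqNgt (leq_trans A_s) // card_fseq size_undup.
by rewrite inE; exists x.
Qed.

Lemma fset4E (x1 x2 x3 x4 : T) : [fset x in [:: x1; x2; x3; x4]] = [fset x1; x2; x3; x4].
Proof. by apply/fsetP => x; rewrite !inE orbF !orbA. Qed.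

Lemma card_fset4_uniq (x1 x2 x3 x4 : T) :
  #|` [fset x1; x2; x3; x4]| = 4%N -> uniq [:: x1; x2; x3; x4].
Proof. by rewrite -fset4E => /fset_seq_card_uniq. Qed.

Lemma card4_fset_extend A (x1 x2 x3 : T) : #|` A| = 4%N -> uniq [:: x1; x2; x3] ->
  {subset [:: x1; x2; x3] <= A} -> exists x4, A = [fset x1; x2; x3; x4].
Proof.
move=> cardA s_uniq sA.
have [x4 x4A x4s] : exists2 x4, x4 \in A & x4 \notin [:: x1; x2; x3].
  by apply: fset_exists_notin; rewrite cardA.
exists x4; rewrite -fset4E -[[:: x1; x2; x3; x4]]/(rcons [:: x1; x2; x3] x4).
apply: fset_eq_of_card; last by rewrite size_rcons cardA.
  by rewrite rcons_uniq x4s.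
by move=> x; rewrite mem_rcons inE => /orP[/eqP -> // | /sA].
Qed.

End FiniteSets.

Section Transport.
Variables (T : choiceType) (V : eqType) (v0 : V) (f f' : T -> T).
Hypotheses (fK : cancel f f') (f'K : cancel f' f).

Definition fsfun_transport (c : {fsfun T -> V with v0}) : {fsfun T -> V with v0} :=
  [fsfun x in f @` finsupp c => c (f' x)].

Lemma fsfun_transportE c x : fsfun_transport c x = c (f' x).
Proof.
rewrite fsfunE; case: ifPn => // /imfsetP nx.
by case: finsuppP => // fx; case: nx; exists (f' x); rewrite ?f'K.
Qed.

Lemma finsupp_transport c : finsupp (fsfun_transport c) = f @` finsupp c.
Proof.
apply/fsetP => x; rewrite mem_finsupp fsfun_transportE -mem_finsupp.
by apply/idP/imfsetP => [fx | [y y_c ->]]; [exists (f' x) | rewrite fK].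
Qed.

End Transport.

Section Translation.
Variables (G : groupType) (F : fieldType).
Local Open Scope group_scope.
Implicit Types (a b c : {fsfun G -> F with 0}) (s r g h : G).

Definition ltranslate s c := fsfun_transport ( *%g s) ( *%g s^-1) c.
Definition rtranslate r c := fsfun_transport ( *%g^~ r) ( *%g^~ r^-1) c.

Lemma ltranslateE s c g : ltranslate s c g = c (s^-1 * g).
Proof. by apply: fsfun_transportE; apply: mulVKg. Qed.

Lemma rtranslateE r c g : rtranslate r c g = c (g * r^-1).
Proof. by apply: fsfun_transportE; apply: mulgVK. Qed.

Lemma supp_ltranslate s c : supp (ltranslate s c) = [fset s * h | h in supp c].
Proof. by apply: finsupp_transport; [apply: mulKg | apply: mulVKg]. Qed.

Lemma mem_supp_ltranslate s c h : (s * h \in supp (ltranslate s c)) = (h \in supp c).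
Proof. by rewrite /supp !mem_finsupp ltranslateE mulKg. Qed.

Lemma mem_supp_rtranslate r c g : (g * r \in supp (rtranslate r c)) = (g \in supp c).
Proof. by rewrite /supp !mem_finsupp rtranslateE mulgK. Qed.

Lemma gconv_translate s r a b g :
  gconv (ltranslate s a) (rtranslate r b) g = gconv a b (s^-1 * g * r^-1).
Proof.
rewrite /gconv supp_ltranslate big_imfset /=; last by move=> ? ? _ _; apply: mulgI.
by apply: eq_bigr => h _; rewrite ltranslateE rtranslateE mulKg invgM !mulgA.
Qed.

Lemma mul_is_one_translate s a b :
  mul_is_one a b -> mul_is_one (ltranslate s a) (rtranslate s^-1 b).
Proof.
by move=> ab g; rewrite gconv_translate invgK ab -mulgA -conjgE conjg_eq1.
Qed.

End Translation.

Section QuadTranslation.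
Variable G : groupType.
Local Open Scope group_scope.
Implicit Types (s r : G) (q : quad G).

Definition quad_translate s r q : quad G :=
  let: (h, h', g, g') := q in (s * h, s * h', g * r, g' * r).

Lemma quad_translateK s r : cancel (quad_translate s r) (quad_translate s^-1 r^-1).
Proof. by case=> [[[h h'] g] g'] /=; rewrite !mulKg !mulgK. Qed.

Lemma quad_translateVK s r : cancel (quad_translate s^-1 r^-1) (quad_translate s r).
Proof. by case=> [[[h h'] g] g'] /=; rewrite !mulVKg !mulgVK. Qed.

Lemma edge_of_translate s r q :
  quad_translate s r @` edge_of q = edge_of (quad_translate s r q).
Proof. by case: q => [[[h h'] g] g']; rewrite imfsetU1 imfset_fset1. Qed.

Lemma joins_translate s r e u v :
  joins (quad_translate s r @` e) (u * r) (v * r) <-> joins e u v.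
Proof.
split=> -[h [h' Ee]]; last first.
  by exists (s * h), (s * h'); rewrite Ee edge_of_translate.
exists (s^-1 * h), (s^-1 * h').
by rewrite -(imfset_can e (quad_translateK s r)) Ee edge_of_translate /= !mulgK.
Qed.

End QuadTranslation.

Section TranslationIso.
Variables (G : groupType) (F : fieldType) (s r : G) (a b : {fsfun G -> F with 0}).
Local Open Scope group_scope.
Local Notation a' := (ltranslate s a).
Local Notation b' := (rtranslate r b).

Lemma valid_quad_translate q :
  valid_quad a' b' (quad_translate s r q) <-> valid_quad a b q.
Proof.
case: q => [[[h h'] g] g'] /=.
rewrite !mem_supp_ltranslate !mem_supp_rtranslate (inj_eq (mulIg r)).
have E : (s * h) * (g * r) = (s * h') * (g' * r) <-> h * g = h' * g'.
  by rewrite !mulgA -!(mulgA s); split=> [/mulgI /mulIg | ->].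
by split=> -[? ? ? ? [? /E ?]].
Qed.

Lemma is_U_edge_translate e :
  is_U_edge a b e -> is_U_edge a' b' (quad_translate s r @` e).
Proof.
case=> q [q_valid ->]; exists (quad_translate s r q).
by rewrite edge_of_translate; split=> //; apply/valid_quad_translate.
Qed.

Lemma is_U_edge_untranslate e :
  is_U_edge a' b' e -> is_U_edge a b (quad_translate s^-1 r^-1 @` e).
Proof.
case=> q [q_valid ->]; exists (quad_translate s^-1 r^-1 q).
rewrite edge_of_translate; split=> //.
by apply/valid_quad_translate; rewrite quad_translateVK.
Qed.

Lemma supp_translate_vertex g : g \in supp b -> g * r \in supp b'.
Proof. by rewrite mem_supp_rtranslate. Qed.

Lemma supp_untranslate_vertex g : g \in supp b' -> g * r^-1 \in supp b.
Proof. by move=> g_b; rewrite -(mem_supp_rtranslate r) mulgVK. Qed.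

Definition vertex_translate (v : U_vertex a b) : U_vertex a' b' :=
  exist _ (sval v * r) (supp_translate_vertex (svalP v)).
Definition vertex_untranslate (v : U_vertex a' b') : U_vertex a b :=
  exist _ (sval v * r^-1) (supp_untranslate_vertex (svalP v)).
Definition edge_translate (e : U_edge a b) : U_edge a' b' :=
  exist _ (quad_translate s r @` sval e) (is_U_edge_translate (svalP e)).
Definition edge_untranslate (e : U_edge a' b') : U_edge a b :=
  exist _ (quad_translate s^-1 r^-1 @` sval e) (is_U_edge_untranslate (svalP e)).

Lemma vertex_translateK : cancel vertex_translate vertex_untranslate.
Proof. by move=> v; apply: val_inj; rewrite /= mulgK. Qed.

Lemma vertex_untranslateK : cancel vertex_untranslate vertex_translate.
Proof. by move=> v; apply: val_inj; rewrite /= mulgVK. Qed.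

Lemma edge_translateK : cancel edge_translate edge_untranslate.
Proof.
move=> e; apply: (eq_sig_hprop (fun _ => proof_irrelevance _)).
exact: imfset_can (quad_translateK s r).
Qed.

Lemma edge_untranslateK : cancel edge_untranslate edge_translate.
Proof.
move=> e; apply: (eq_sig_hprop (fun _ => proof_irrelevance _)).
exact: imfset_can (quad_translateVK s r).
Qed.

Lemma U_iso_translate : U_iso a b a' b'.
Proof.
exists vertex_translate, edge_translate; split.
- exact: Bijective vertex_translateK vertex_untranslateK.
- exact: Bijective edge_translateK edge_untranslateK.
- move=> u v; split=> -[e].
    by exists (edge_translate e); apply/joins_translate.
  rewrite -(edge_untranslateK e) => /joins_translate.
  by exists (edge_untranslate e).
- move=> e1 e2; split=> -[w [x [y [J1 J2]]]].
    by exists (w * r), (x * r), (y * r); split; apply/joins_translate.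
  exists (w / r), (x / r), (y / r).
  by split; apply/(joins_translate s r); rewrite !mulgVK.
Qed.

End TranslationIso.

Lemma translate_inverse_pair (G : groupType) (F : fieldType) (t : G)
    (a b : {fsfun G -> F with 0}) :
  mul_is_one a b -> exists a' b' : {fsfun G -> F with 0},
    [/\ supp a' = [fset (t * h)%g | h in supp a], mul_is_one a' b' & U_iso a b a' b'].
Proof.
move=> ab; exists (ltranslate t a), (rtranslate t^-1 b).
by rewrite supp_ltranslate; split; [| exact: mul_is_one_translate | exact: U_iso_translate].
Qed.

Section SupportShape.
Variables (G : groupType) (F : fieldType).
Local Open Scope group_scope.

Lemma torsion_free_selfinv (x : G) : torsion_free G -> x^-1 = x -> x = 1.
Proof. by move=> tf xV; apply: (tf x 2) => //; rewrite expg2 -{1}xV mulVg. Qed.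

Lemma S_set_collision (c : {fsfun G -> F with 0}) :
  (#|` S_set c| < #|` supp c| * (#|` supp c|).-1)%N ->
  exists h1 h2 h3 h4 : G,
    [/\ [/\ h1 \in supp c, h2 \in supp c, h3 \in supp c & h4 \in supp c],
        [/\ h1 != h2, h3 != h4 & h1 != h3] & h1^-1 * h2 = h3^-1 * h4].
Proof.
move=> lt_card; apply: NNPP => no_collision; move: lt_card.
rewrite card_fset_sum1 /S_set big_imfset2 /=; last first.
  move=> [h1 h2] [h3 h4]; rewrite !inE /=.
  move=> /andP[h1c /andP[h21 h2c]] /andP[h3c /andP[h43 h4c]].
  case: (eqVneq h1 h3) => [<- /mulgI -> // | h13 E].
  by case: no_collision; exists h1, h2, h3, h4; do !split; rewrite // eq_sym.
rewrite big_seq (eq_bigr (fun=> (#|` supp c|).-1)) => [|h hc]; last first.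
  by rewrite -card_fset_sum1 (cardfsD1 h (supp c)) hc.
by rewrite -big_seq big_const_seq count_predT iter_addn_0 mulnC ltnn.
Qed.

Lemma support_normal_form (c : {fsfun G -> F with 0}) :
  torsion_free G -> #|` supp c| = 4%N -> #|` S_set c| = 10%N ->
  exists t x y : G,
    [fset t * h | h in supp c] = [fset 1; x; x^-1; y] \/
    [fset t * h | h in supp c] = [fset 1; x; y; x * y].
Proof.
move=> tf card4 card10.
have /S_set_collision[h1 [h2 [h3 [h4 [[h1c h2c h3c h4c] [h12 h34 h13] E]]]]] :
  (#|` S_set c| < #|` supp c| * (#|` supp c|).-1)%N by rewrite card4 card10.
have [h32 | h32] := eqVneq h3 h2.
  subst h3; have h14 : h1 != h4.
    apply: contra_neq h12 => h14; rewrite -[h2](mulVKg h1).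
    by rewrite (torsion_free_selfinv (x := h1^-1 * h2)) ?mulg1 // invgM invgK E -h14.
  have [y ->] : exists y, supp c = [fset h2; h4; h1; y].
    apply: card4_fset_extend => //=.
      by rewrite !inE !negb_or h34 (eq_sym h2) h12 (eq_sym h4) h14.
    by move=> x; rewrite !inE => /or3P[] /eqP ->.
  exists h2^-1, (h1^-1 * h2), (h2^-1 * y); left.
  by rewrite !imfsetU !imfset_fset1 mulVg -E invgM invgK.
have [h41 | h41] := eqVneq h4 h1.
  subst h4; have [y ->] : exists y, supp c = [fset h1; h2; h3; y].
    apply: card4_fset_extend => //=.
      by rewrite !inE !negb_or h12 h13 (eq_sym h2) h32.
    by move=> x; rewrite !inE => /or3P[] /eqP ->.
  exists h1^-1, (h1^-1 * h2), (h1^-1 * y); left.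
  by rewrite !imfsetU !imfset_fset1 mulVg E invgM invgK.
have h24 : h2 != h4.
  by apply: contra_neq h13 => h24; move: E; rewrite h24 => /mulIg /invg_inj.
have -> : supp c = [fset h1; h3; h2; h4].
  rewrite -fset4E; apply: fset_eq_of_card; rewrite ?card4 //=.
    by rewrite !inE !negb_or h13 h12 (eq_sym h1) h41 h32 h34 h24.
  by move=> x; rewrite !inE => /or4P[] /eqP ->.
exists h1^-1, (h1^-1 * h3), (h1^-1 * h2); right.
by rewrite !imfsetU !imfset_fset1 mulVg E !mulgA mulgK.
Qed.

End SupportShape.

Theorem mainTheorem14 (G : groupType) (F : fieldType)
    (a b : {fsfun G -> F with 0}) :
  torsion_free G ->
  is_unit_GA a ->
  #|` supp a| = 4%N ->
  #|` S_set a| = 10%N ->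
  is_mate a b ->
  (exists x y : G, [/\ x != y, x != 1%g, y != 1%g &
     exists a' b' : {fsfun G -> F with 0},
       [/\ supp a' = [fset 1%g; x; x^-1%g; y], mul_is_one a' b' & U_iso a b a' b']])
  \/
  (exists x y : G, [/\ x != y, x != 1%g, y != 1%g &
     exists a' b' : {fsfun G -> F with 0},
       [/\ supp a' = [fset 1%g; x; y; (x * y)%g], mul_is_one a' b' & U_iso a b a' b']]).
Proof.
move=> tf _ card4 card10 [ab _].
have [t [x [y shape]]] := support_normal_form tf card4 card10.
have [a' [b' [supp_a' ab' iso]]] := translate_inverse_pair t ab.
have card_a' : #|` supp a'| = 4%N by rewrite supp_a' card_imfset //=; apply: mulgI.
case: shape => shape; rewrite shape in supp_a'; move: card_a';
  rewrite supp_a' => /card_fset4_uniq /=; rewrite !inE !negb_or.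
- case/and4P => /and3P[x1 _ y1] /andP[_ xy] _ _.
  by left; exists x, y; rewrite !(eq_sym _ 1%g); split=> //; exists a', b'.
- case/and4P => /and3P[x1 y1 _] /andP[xy _] _ _.
  by right; exists x, y; rewrite !(eq_sym _ 1%g); split=> //; exists a', b'.
Qed.
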